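(* Let $p$ be a prime and let $G$ be a finite $p$-group. Let $x\in G$ with $o(x)=p$, and let $\Upsilon$ be the connected component of the cyclic graph $\Delta(G)$ containing $x$. Then $x\sim y$ (i.e. $\langle x,y\rangle$ is cyclic) for every $y\in\Upsilon$ with $y\neq x$.
   Context: For a finite group $G$, the cyclic graph $\Delta(G)$ has vertex set $G^{\#}=G\setminus\{1\}$, and distinct vertices $x,y$ are adjacent (written $x\sim y$) if and only if the subgroup $\langle x,y\rangle$ is cyclic. $o(x)$ denotes the order of $x$. *)

From mathcomp Require Import all_boot all_fingroup all_solvable.
Set Implicit Arguments. Unset Strict Implicit. Unset Printing Implicit Defensive.
Local Open Scope group_scope.

Definition cyc_adj (gT : finGroupType) (G : {set gT}) : rel gT :=
  fun x y => [&& x \in G^#, y \in G^#, x != y & cyclic <<[set x; y]>>].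

Definition same_component (gT : finGroupType) (G : {set gT}) (x y : gT) : bool :=
  connect (cyc_adj G) x y.

From mathcomp Require Import all_boot all_fingroup all_solvable.
Set Implicit Arguments. Unset Strict Implicit. Unset Printing Implicit Defensive.
Local Open Scope group_scope.

(* A cyclic group has at most one subgroup of each order, and <z> contains
   one of order p whenever z is a nontrivial p-element.  So if x has order p
   and lies in <w>, and <w, z> is cyclic, then <x> is the subgroup of order
   p of <w, z>, hence lies in <z>.  The property "x \in <[w]>" therefore
   propagates along the edges of Delta(G) to every vertex y of the component
   of x, and then <x, y> = <y> is cyclic. *)

Lemma prime_order_mem_cycle (gT : finGroupType) (C : {group gT}) p (x z : gT) :
  cyclic C -> x \in C -> z \in C -> #[x] = p -> p.-elt z -> z != 1 ->
  x \in <[z]>.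
Proof.
move=> cycC Cx Cz ox p_z ntz.
have ntZ : <[z]> != 1 by rewrite cycle_eq1.
have [pr_p p_dvd_z _] := pgroup_pdiv p_z ntZ.
have [u zu ou] := Cauchy pr_p p_dvd_z.
have Cu : u \in C by apply: subsetP zu; rewrite cycle_subG.
have /eqP Zux : <[u]> :==: <[x]>.
  by rewrite (eq_subG_cyclic cycC) ?cycle_subG // -/#[u] -/#[x] ou ox.
by rewrite -cycle_subG -Zux cycle_subG.
Qed.

Lemma cyclic_gen2_mem_cycle (gT : finGroupType) (u v : gT) :
  u \in <[v]> -> cyclic <<[set u; v]>>.
Proof.
move=> uv; apply: cyclicS (cycle_cyclic v).
by rewrite gen_subG; apply/subsetP => w /set2P[] ->; rewrite ?cycle_id.
Qed.

Lemma cyc_adj_sym (gT : finGroupType) (G : {set gT}) : symmetric (cyc_adj G).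
Proof. by move=> w z; rewrite /cyc_adj setUC [w == z]eq_sym andbCA. Qed.

Section PrimeOrderComponent.

Variables (gT : finGroupType) (G : {group gT}) (p : nat) (x : gT).
Hypotheses (pG : p.-group G) (ox : #[x] = p).

Lemma cyc_adj_mem_cycle w z : cyc_adj G w z -> x \in <[w]> -> x \in <[z]>.
Proof.
case/and4P=> _ /setD1P[ntz Gz] _ cycWZ xw.
apply: prime_order_mem_cycle cycWZ _ _ ox (mem_p_elt pG Gz) ntz.
  by apply: subsetP xw; rewrite cycle_subG mem_gen // !inE eqxx.
by rewrite mem_gen // !inE eqxx orbT.
Qed.

Lemma closed_cyc_adj_mem_cycle :
  closed (cyc_adj G) [pred w | (w \in G^#) && (x \in <[w]>)].
Proof.
move=> w z wz; have zw := wz; rewrite cyc_adj_sym in zw.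
case/and4P: (wz) => /setD1P[ntw Gw] /setD1P[ntz Gz] _ _.
rewrite !inE ntw Gw ntz Gz /=.
by apply/idP/idP; apply: cyc_adj_mem_cycle.
Qed.

Lemma same_component_mem_cycle y :
  x \in G^# -> same_component G x y -> (y \in G^#) && (x \in <[y]>).
Proof.
move=> /setD1P[ntx Gx] xy; have := closed_connect closed_cyc_adj_mem_cycle xy.
by rewrite !inE ntx Gx cycle_id => <-.
Qed.

End PrimeOrderComponent.

Theorem lemma2p2 (gT : finGroupType) (G : {group gT}) (p : nat) (x : gT) :
  prime p -> p.-group G -> x \in G -> #[x] = p ->
  forall y : gT, same_component G x y -> y != x -> cyc_adj G x y.
Proof.
move=> pr_p pG Gx ox y xy neq_yx.
have G'x : x \in G^# by rewrite !inE -order_gt1 ox prime_gt1.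
have /andP[G'y xy_cyc] := same_component_mem_cycle pG ox G'x xy.
apply/and4P; split=> //; first by rewrite eq_sym.
exact: cyclic_gen2_mem_cycle.
Qed.
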